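(* Let $\mathscr H=(V,E)$ be a connected hypergraph, and let $\{a_1,\dots,a_m\}$ and $\{x_1,\dots,x_m\}$ be disjoint sets of hyperedges. Let $\mathbf f$ be a hypertree such that $x_j$ can transfer valence to $a_j$ for all $j$, but $x_j$ cannot transfer valence to $a_i$ for any $i<j$. Then for every subset $J\subset\{1,\dots,m\}$, the vector $\mathbf f+\sum_{j\in J}(\mathbf i_{\{a_j\}}-\mathbf i_{\{x_j\}})$ is a hypertree.
   Context: A hypergraph $(V,E)$ has vertex set $V$ and a finite multiset $E$ of non-empty subsets of $V$ (hyperedges); its bipartite graph has color classes $V$ and $E$ with $v$ joined to $e$ iff $v\in e$, and the hypergraph is connected if this graph is. A hypertree is a function $\mathbf f\colon E\to\mathbf N$ such that some spanning tree of this bipartite graph has degree $\mathbf f(e)+1$ at each $e\in E$. $\mathbf i_{\{e\}}$ is the indicator vector of $e$. Hyperedge $x$ can transfer valence to $y$ at $\mathbf f$ if $\mathbf f-\mathbf i_{\{x\}}+\mathbf i_{\{y\}}$ is a hypertree. *)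

From mathcomp Require Import all_boot all_order all_algebra.
Set Implicit Arguments. Unset Strict Implicit. Unset Printing Implicit Defensive.
Import GRing.Theory Num.Theory.

(* A hypergraph with finite vertex type V and hyperedges indexed by the finite
   type E (so E is a multiset of subsets of V): H e is the vertex set of e. *)
Definition hypergraph (V E : finType) := E -> {set V}.

Section Hyper.
Variables (V E : finType) (H : hypergraph V E).

Definition hyperedges_nonempty := forall e : E, H e != set0.

Definition bip_edges : {set V * E} := [set p | p.1 \in H p.2].

Definition adj (T : {set V * E}) : rel (V + E) := fun a b =>
  match a, b with
  | inl v, inr e => (v, e) \in T
  | inr e, inl v => (v, e) \in T
  | _, _ => false
  end.

Definition graph_connected (T : {set V * E}) :=
  forall a b : V + E, connect (adj T) a b.

Definition hconnected := graph_connected bip_edges.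

(* spanning tree of the bipartite graph: a set of bipartite edges which is
   connected on all of V + E and minimally so (i.e. acyclic) *)
Definition spanning_tree (T : {set V * E}) :=
  [/\ T \subset bip_edges, graph_connected T &
      forall p, p \in T -> ~ graph_connected (T :\ p)].

Definition tdeg (T : {set V * E}) (e : E) : nat := #|[set v | (v, e) \in T]|.

Definition hypertree (f : E -> int) :=
  exists T, spanning_tree T /\ forall e, ((tdeg T e)%:Z = f e + 1)%R.

Definition ind (e : E) : E -> int := fun e' => ((e == e')%:Z)%R.

Definition can_transfer (f : E -> int) (x y : E) :=
  hypertree (fun e => (f e - ind x e + ind y e)%R).

End Hyper.

From mathcomp Require Import all_boot all_order all_algebra zify ring.
Import GRing.Theory Num.Theory.
Set Implicit Arguments. Unset Strict Implicit. Unset Printing Implicit Defensive.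

(* Hypertrees are the bases of an integral polymatroid, so they satisfy the
   exchange property: if g u < f u for hypertrees f and g, then f v < g v for
   some v such that f - i_u + i_v is again a hypertree.  It follows from the
   edge exchange between two spanning trees of the bipartite graph, repeated
   until the tree of f has lost an edge at u.

   Write f_K := f + \sum_(j in K) (i_(a j) - i_(x j)).  By induction on |K| we
   show at once that f_K is a hypertree and that at f_K no x j can transfer
   valence to a i for i < j outside K.  For j1 < j0 in K, exchanging between
   f_(K - j0) and f_(K - j1) at x j0 yields either a j0, which gives f_K, or
   x j1, which would be a forbidden transfer from x j0 to a j1 at
   f_(K - j0 - j1).  A forbidden transfer at f_K is excluded likewise, by an
   exchange against f_(K - k) for some k in K. *)

Section Bipartite.
Variables V E : finType.
Implicit Types (T X Y : {set V * E}) (phi : V + E -> bool).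

Lemma adj_sym T : symmetric (adj T).
Proof. by case=> [v|e] [w|f]. Qed.

Lemma connect_adjC T a b : connect (adj T) a b = connect (adj T) b a.
Proof. exact: (sym_connect_sym (adj_sym T)). Qed.

Lemma connect_adj_edge T v e : (v, e) \in T -> connect (adj T) (inl v) (inr e).
Proof. exact: connect1. Qed.

Lemma connect_adj_sub_connect X Y a b :
    (forall v e, (v, e) \in Y -> connect (adj X) (inl v) (inr e)) ->
  connect (adj Y) a b -> connect (adj X) a b.
Proof.
move=> hY; apply: connect_sub => -[v|e] [w|f] //= h; first exact: hY.
by rewrite connect_adjC; apply: hY.
Qed.

Lemma connect_adj_sub X Y a b :
  X \subset Y -> connect (adj X) a b -> connect (adj Y) a b.
Proof.
move=> /subsetP sXY; apply: connect_adj_sub_connect => v e /sXY.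
exact: connect_adj_edge.
Qed.

Lemma connect_adj_invariant T phi :
    (forall v e, (v, e) \in T -> phi (inl v) = phi (inr e)) ->
  forall a b, connect (adj T) a b -> phi a = phi b.
Proof.
move=> hT a b /connectP [s]; elim: s a => [|c s IH] a /=; first by move=> _ ->.
case/andP=> hac hp hb; rewrite -(IH c hp hb).
by case: a c hac {hp hb} => [v|e] [w|f] //= /hT.
Qed.

Lemma connect_adj_flip T q phi a b : graph_connected T ->
    (forall v e, (v, e) \in T -> (v, e) != q -> phi (inl v) = phi (inr e)) ->
  phi a != phi b -> phi (inl q.1) != phi (inr q.2).
Proof.
move=> hT inv; apply: contra => /eqP phiq; apply/eqP.
apply: connect_adj_invariant (hT a b) => v e he.
by case: (eqVneq (v, e) q) => [hq|]; [move: phiq; rewrite -hq | apply: inv].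
Qed.

Lemma connect_adj_edgeE T c v e : (v, e) \in T ->
  connect (adj T) c (inl v) = connect (adj T) c (inr e).
Proof.
move=> h; apply/idP/idP => hc; apply: connect_trans hc _; last first.
  by rewrite connect_adjC; apply: connect_adj_edge.
exact: connect_adj_edge.
Qed.

Lemma tdeg_setD1 T v e' e :
  (v, e') \in T -> tdeg (T :\ (v, e')) e + (e' == e) = tdeg T e.
Proof.
move=> hT; rewrite /tdeg; case: (eqVneq e' e) => [<-|ne].
  rewrite [RHS](cardsD1 v) inE hT addnC; congr (_ + _).
  by apply: eq_card => w; rewrite !inE xpair_eqE eqxx andbT.
rewrite addn0; apply: eq_card => w.
by rewrite !inE xpair_eqE (eq_sym e) (negbTE ne) andbF.
Qed.

Lemma tdeg_setU1 T v e' e :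
  (v, e') \notin T -> tdeg ((v, e') |: T) e = tdeg T e + (e' == e).
Proof.
move=> hT; rewrite /tdeg; case: (eqVneq e' e) => [<-|ne].
  have -> : [set w | (w, e') \in (v, e') |: T] = v |: [set w | (w, e') \in T].
    by apply/setP => w; rewrite !inE xpair_eqE eqxx andbT.
  by rewrite cardsU1 inE hT addnC.
rewrite addn0; apply: eq_card => w.
by rewrite !inE xpair_eqE (eq_sym e) (negbTE ne) andbF.
Qed.

Lemma cut_sides T pv pe : graph_connected T -> (pv, pe) \in T -> forall w,
  connect (adj (T :\ (pv, pe))) (inl pv) w ||
  connect (adj (T :\ (pv, pe))) (inr pe) w.
Proof.
move=> hc hp w; set X := T :\ (pv, pe).
pose side w := connect (adj X) (inl pv) w || connect (adj X) (inr pe) w.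
have : side (inl pv) by rewrite /side connect0.
suff -> : side (inl pv) = side w by [].
apply: connect_adj_invariant (hc _ _) => v e he; rewrite /side.
case: (eqVneq (v, e) (pv, pe)) => [[-> ->]|hne]; first by rewrite !connect0 orbT.
have he' : (v, e) \in X by rewrite !inE hne.
by rewrite !(connect_adj_edgeE _ he').
Qed.

Lemma cut_side_neq T pv pe c d : graph_connected T -> (pv, pe) \in T ->
  ~~ connect (adj (T :\ (pv, pe))) c d ->
  connect (adj (T :\ (pv, pe))) (inl pv) c !=
  connect (adj (T :\ (pv, pe))) (inl pv) d.
Proof.
move=> hc hp; set X := T :\ (pv, pe); apply: contra => /eqP same.
have := cut_sides hc hp c; have := cut_sides hc hp d; rewrite -/X.
case Yc: (connect _ (inl pv) c) same => same /= sd sc.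
  by rewrite connect_adjC in Yc; apply: connect_trans Yc _; rewrite -same.
by rewrite -same /= in sd; rewrite connect_adjC in sc; apply: connect_trans sc sd.
Qed.

Lemma swap_connected T pv pe qv qe : graph_connected T -> (pv, pe) \in T ->
    ~~ connect (adj (T :\ (pv, pe))) (inl qv) (inr qe) ->
  graph_connected ((qv, qe) |: (T :\ (pv, pe))).
Proof.
move=> hc hp nq; set X := T :\ (pv, pe); set T' := (qv, qe) |: X.
have sub := connect_adj_sub (subsetU1 (qv, qe) X).
have join c d : connect (adj T') c d -> connect (adj X) (inl pv) c ->
    connect (adj X) (inr pe) d -> connect (adj T') (inl pv) (inr pe).
  move=> hcd hpc hpd; apply: connect_trans (sub _ _ hpc) (connect_trans hcd _).
  by apply: sub; rewrite connect_adjC.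
have hq : connect (adj T') (inl qv) (inr qe) by apply: connect_adj_edge; rewrite setU11.
have ppe : connect (adj T') (inl pv) (inr pe).
  have := cut_sides hc hp (inl qv); have := cut_sides hc hp (inr qe).
  move: (cut_side_neq hc hp nq); rewrite -/X.
  case Yv: (connect _ (inl pv) (inl qv)); case Yqe: (connect _ _ (inr qe)) => //= _.
    by move=> hqe _; apply: join hq Yv hqe.
  by move=> _ hqv; apply: join Yqe hqv; rewrite connect_adjC.
have to_pv w : connect (adj T') (inl pv) w.
  case/orP: (cut_sides hc hp w) => /sub // hw; exact: connect_trans ppe hw.
by move=> a b; apply: connect_trans (to_pv b); rewrite connect_adjC.
Qed.

Lemma exists_crossing_edge X Y c d : graph_connected Y ->
    ~~ connect (adj X) c d ->
  exists2 q, q \in Y & ~~ connect (adj X) (inl q.1) (inr q.2).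
Proof.
move=> hY ncd.
have [/existsP [q /andP [hq nq]]|none] :=
  boolP [exists q, (q \in Y) && ~~ connect (adj X) (inl q.1) (inr q.2)].
  by exists q.
case/negP: ncd; apply: connect_adj_sub_connect (hY c d) => v e he.
by apply: contraNT none => nc; apply/existsP; exists (v, e); rewrite he.
Qed.

Lemma exists_edge_tdeg_gt X Y e : tdeg Y e < tdeg X e ->
  exists2 v, (v, e) \in X & (v, e) \notin Y.
Proof.
move=> lt.
have /subsetPn [v] : ~~ ([set v | (v, e) \in X] \subset [set v | (v, e) \in Y]).
  by apply: contraTN lt => /subset_leq_card; rewrite -leqNgt.
by rewrite !inE; exists v.
Qed.

End Bipartite.

Section SpanningTrees.
Variables (V E : finType) (H : hypergraph V E).
Implicit Types T : {set V * E}.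

Lemma spanning_tree_cut T pv pe : spanning_tree H T -> (pv, pe) \in T ->
  ~~ connect (adj (T :\ (pv, pe))) (inl pv) (inr pe).
Proof.
case=> _ hc hmin hp; apply/negP => cut; apply: (hmin _ hp) => a b.
apply: connect_adj_sub_connect (hc a b) => v e he.
case: (eqVneq (v, e) (pv, pe)) => [[-> ->] //|hne].
by apply: connect_adj_edge; rewrite !inE hne.
Qed.

Lemma swap_acyclic T pv pe qv qe : spanning_tree H T -> (pv, pe) \in T ->
    ~~ connect (adj (T :\ (pv, pe))) (inl qv) (inr qe) ->
  forall r, r \in (qv, qe) |: (T :\ (pv, pe)) ->
  ~ graph_connected (((qv, qe) |: (T :\ (pv, pe))) :\ r).
Proof.
move=> ht hp nq [rv re] hr hcon; have [_ hc hmin] := ht.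
set X := T :\ (pv, pe) in nq hr hcon.
case: (eqVneq (rv, re) (qv, qe)) => [hrq|hrq].
  apply: (hmin _ hp) => a b; apply: connect_adj_sub (hcon a b).
  by apply/subsetP => w; rewrite hrq !inE => /andP [/negbTE ->].
have rX : (rv, re) \in X by move: hr; rewrite in_setU1 (negbTE hrq).
have /setD1P [rp rT] := rX.
have pTr : (pv, pe) \in T :\ (rv, re) by rewrite !inE hp andbT eq_sym.
have old_edge v e : (v, e) \in ((qv, qe) |: X) :\ (rv, re) -> (v, e) != (qv, qe) ->
    (v, e) \in X /\ (v, e) \in T :\ (rv, re).
  by rewrite !inE => /andP [-> /orP [-> //|/andP [-> ->]]].
(* Y and S both change across q and nowhere else on the connected graph
   ((qv, qe) |: X) :\ r, so Y (+) S is constant on it; yet it differs at the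
   two ends of (pv, pe). *)
pose Y w := connect (adj X) (inl pv) w.
pose S w := connect (adj (T :\ (rv, re))) (inl rv) w.
have Yq : Y (inl qv) != Y (inr qe) by apply: cut_side_neq.
have Sq : S (inl qv) != S (inr qe).
  apply: (connect_adj_flip (q := (qv, qe)) (a := inl rv) (b := inr re) hcon).
    by move=> v e /old_edge he /he [_ hv]; rewrite /S (connect_adj_edgeE _ hv).
  by rewrite /S connect0 (negbTE (spanning_tree_cut ht rT)).
have parity : Y (inl pv) (+) S (inl pv) = Y (inr pe) (+) S (inr pe).
  apply: (connect_adj_invariant (phi := fun w => Y w (+) S w)) (hcon _ _) => v e he.
  case: (eqVneq (v, e) (qv, qe)) => [[-> ->]|/(old_edge _ _ he) [hX hTr]].
    by move: Yq Sq; case: (Y _) (Y _) (S _) (S _) => [] [] [] [].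
  by rewrite /Y /S (connect_adj_edgeE _ hX) (connect_adj_edgeE _ hTr).
move: parity; rewrite /Y connect0 (negbTE (spanning_tree_cut ht hp)).
by rewrite /S (connect_adj_edgeE _ pTr); case: (connect _ _ _).
Qed.

Lemma spanning_tree_swap T pv pe qv qe : spanning_tree H T -> (pv, pe) \in T ->
    (qv, qe) \in bip_edges H -> ~~ connect (adj (T :\ (pv, pe))) (inl qv) (inr qe) ->
  spanning_tree H ((qv, qe) |: (T :\ (pv, pe))).
Proof.
move=> ht hp hq nq; have [sub hc _] := ht; split.
- by rewrite subUset sub1set hq (subset_trans (subsetDl _ _) sub).
- exact: swap_connected.
- exact: swap_acyclic.
Qed.

End SpanningTrees.

Section Hypertrees.
Variables (V E : finType) (H : hypergraph V E).
Local Open Scope ring_scope.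

(* [can_transfer H f x y] unfolds to [hypertree H (move_valence f x y)]. *)
Definition move_valence (f : E -> int) (x y : E) : E -> int :=
  fun e => f e - ind x e + ind y e.

Lemma ind_id (e : E) : ind e e = 1.
Proof. by rewrite /ind eqxx. Qed.

Lemma ind_neq (x e : E) : x != e -> ind x e = 0.
Proof. by rewrite /ind => /negbTE ->. Qed.

Lemma eq_hypertree (f g : E -> int) : f =1 g -> hypertree H f -> hypertree H g.
Proof. by move=> fg [T [hT hd]]; exists T; split => // e; rewrite hd fg. Qed.

Lemma hypertree_exchange_step (f g : E -> int) u B1 B2 :
    spanning_tree H B1 -> spanning_tree H B2 ->
    (forall e, (tdeg B1 e)%:Z = f e + 1) -> (forall e, (tdeg B2 e)%:Z = g e + 1) ->
    g u < f u ->
  exists B1' qe, [/\ spanning_tree H B1',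
     forall e, (tdeg B1' e)%:Z = move_valence f u qe e + 1 &
     #|B1 :\: B2| = (#|B1' :\: B2|).+1].
Proof.
move=> t1 t2 d1 d2 hu.
have [pv p1 p2] : exists2 pv, (pv, u) \in B1 & (pv, u) \notin B2.
  by apply: exists_edge_tdeg_gt; move: (d1 u) (d2 u) hu; lia.
have [sub2 c2 _] := t2.
have [[qv qe] /= q2 nq] := exists_crossing_edge c2 (spanning_tree_cut t1 p1).
have q1 : (qv, qe) \notin B1 :\ (pv, u).
  by apply: contra nq => q1; apply: connect_adj_edge.
exists ((qv, qe) |: (B1 :\ (pv, u))), qe; split.
- exact: spanning_tree_swap (subsetP sub2 _ q2) nq.
- move=> e; rewrite tdeg_setU1 // /move_valence /ind.
  move: (d1 e); rewrite -(tdeg_setD1 e p1).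
  by case: (u == e); case: (qe == e) => /=; lia.
- rewrite [LHS](cardsD1 (pv, u)) !inE p1 p2 /=; congr _.+1.
  apply: eq_card => w; rewrite !inE.
  by case: (eqVneq w (qv, qe)) => [->|]; rewrite ?q2 ?andbF //= andbCA.
Qed.

Lemma hypertree_exchange (f g : E -> int) u :
    hypertree H f -> hypertree H g -> g u < f u ->
  exists v, f v < g v /\ hypertree H (move_valence f u v).
Proof.
move=> [B1 [t1 d1]] [B2 [t2 d2]].
have [n] := ubnP #|B1 :\: B2|; elim: n f u B1 t1 d1 => // n IH f u B1 t1 d1 small hu.
have [B1' [qe [t1' d1' card]]] := hypertree_exchange_step t1 t2 d1 d2 hu.
have [lt|ge] := ltrP (f qe) (g qe); first by exists qe; split => //; exists B1'.
have hu' : g qe < move_valence f u qe qe.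
  rewrite /move_valence ind_id; case: (eqVneq u qe) => [<-|uq].
    by rewrite ind_id; lia.
  by rewrite ind_neq //; lia.
have [|v [hv ht]] := IH _ _ _ t1' d1' _ hu'; first by rewrite -ltnS -card.
exists v; split; last by apply: eq_hypertree ht => e; rewrite /move_valence; lia.
move: hv hu'; rewrite /move_valence.
case: (eqVneq qe v) => [<-|qv]; first by lia.
rewrite (ind_neq qv); case: (eqVneq u v) => [uv|uv]; last by rewrite ind_neq //; lia.
by move: hu; rewrite -uv ind_id; lia.
Qed.

Lemma ind_balance_gt0 (p1 p2 q1 q2 v : E) :
  0 < ind p1 v + ind p2 v - ind q1 v - ind q2 v -> v = p1 \/ v = p2.
Proof.
rewrite /ind; case: (eqVneq p1 v) => [->|_]; first by left.
case: (eqVneq p2 v) => [->|_]; first by right.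
by case: (q1 == v); case: (q2 == v) => /=; lia.
Qed.

End Hypertrees.

Section Transfers.
Variables (V E : finType) (H : hypergraph V E) (m : nat) (a x : 'I_m -> E).
Variable f : E -> int.
Hypotheses (a_inj : injective a) (x_inj : injective x) (ax : forall i j, a i != x j).
Hypothesis f_tree : hypertree H f.
Hypothesis transfer : forall j, can_transfer H f (x j) (a j).
Hypothesis no_transfer : forall i j : 'I_m, (i < j)%N -> ~ can_transfer H f (x j) (a i).
Implicit Types K : {set 'I_m}.
Local Open Scope ring_scope.

Definition transfers (K : {set 'I_m}) : E -> int :=
  fun e => f e + \sum_(j in K) (ind (a j) e - ind (x j) e).

Definition no_backward_transfer (K : {set 'I_m}) :=
  forall i j : 'I_m, (i < j)%N -> i \notin K -> j \notin K ->
  ~ can_transfer H (transfers K) (x j) (a i).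

Lemma transfers0 : transfers set0 =1 f.
Proof. by move=> e; rewrite /transfers big_set0 addr0. Qed.

Lemma transfersD1 K k : k \in K ->
  transfers K =1 move_valence (transfers (K :\ k)) (x k) (a k).
Proof.
by move=> kK e; rewrite /transfers /move_valence (big_setD1 k kK) /=; ring.
Qed.

Lemma transfers_hypertree_pair K (j1 j0 : 'I_m) :
    (j1 < j0)%N -> j1 \in K -> j0 \in K ->
    hypertree H (transfers (K :\ j0)) -> hypertree H (transfers (K :\ j1)) ->
    no_backward_transfer (K :\ j0 :\ j1) ->
  hypertree H (transfers K).
Proof.
move=> j10 j1K j0K t0 t1 nb; set K2 := K :\ j0 :\ j1 in nb.
have j01 : j0 != j1 by rewrite neq_ltn j10 orbT.
have E0 := transfersD1 j0K.
have E1 : transfers (K :\ j0) =1 move_valence (transfers K2) (x j1) (a j1).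
  by apply: transfersD1; rewrite !inE eq_sym j01.
have E2 : transfers (K :\ j1) =1 move_valence (transfers K2) (x j0) (a j0).
  rewrite /K2 setDDl setUC -setDDl; apply: transfersD1.
  by rewrite !inE j01.
have [j1K2 j0K2] : j1 \notin K2 /\ j0 \notin K2 by rewrite !inE !eqxx /= andbF.
clearbody K2.
have hu : transfers (K :\ j1) (x j0) < transfers (K :\ j0) (x j0).
  rewrite E1 E2 /move_valence ind_id.
  by rewrite !ind_neq ?ax ?(inj_eq x_inj) 1?eq_sym //; lia.
have [v [hv ht]] := hypertree_exchange t0 t1 hu.
have : v = a j0 \/ v = x j1.
  apply: (@ind_balance_gt0 _ _ _ (x j0) (a j1)).
  by move: hv; rewrite E1 E2 /move_valence; lia.
case=> ?; subst v; first by apply: eq_hypertree ht => e; rewrite E0.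
case: (nb j1 j0 j10 j1K2 j0K2).
by apply: eq_hypertree ht => e; rewrite /move_valence E1 /move_valence; lia.
Qed.

Section Induction.
Variable K : {set 'I_m}.
Hypothesis IH : forall K', (#|K'| < #|K|)%N ->
  hypertree H (transfers K') /\ no_backward_transfer K'.

Lemma transfers_hypertree_step : hypertree H (transfers K).
Proof.
have [-> | [j0 j0K]] := set_0Vmem K.
  by apply: eq_hypertree f_tree => e; rewrite transfers0.
have ltK k : k \in K -> (#|K :\ k| < #|K|)%N by move=> /properD1 /proper_card.
have [K0 | [j1 /setD1P [j1j0 j1K]]] := set_0Vmem (K :\ j0).
  apply: eq_hypertree (transfer j0) => e.
  by rewrite (transfersD1 j0K) K0 /move_valence transfers0.
have [t0 _] := IH (ltK _ j0K); have [t1 _] := IH (ltK _ j1K).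
have ltK2 : (#|K :\ j0 :\ j1| < #|K|)%N.
  exact: leq_ltn_trans (subset_leq_card (subD1set _ _)) (ltK _ j0K).
have [_ nb] := IH ltK2; case: (ltngtP j1 j0) => [j10|j01|/val_inj e10].
- exact: transfers_hypertree_pair j10 j1K j0K t0 t1 nb.
- apply: transfers_hypertree_pair j01 j0K j1K t1 t0 _.
  by rewrite setDDl setUC -setDDl.
- by rewrite e10 eqxx in j1j0.
Qed.

Lemma no_backward_transfer_step : no_backward_transfer K.
Proof.
move=> i j ij iK jK ht.
have [K0 | [k kK]] := set_0Vmem K.
  apply: (no_transfer ij); apply: eq_hypertree ht => e.
  by rewrite K0 /move_valence transfers0.
have [tK' nb] := IH (proper_card (properD1 kK)).
have [iK' jK' kK'] : [/\ i \notin K :\ k, j \notin K :\ k & k \notin K :\ k].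
  by rewrite !inE (negbTE iK) (negbTE jK) eqxx !andbF.
have ki : k != i by apply: contraNneq iK => <-.
have kj : k != j by apply: contraNneq jK => <-.
have EK := transfersD1 kK.
move: (K :\ k) EK tK' nb iK' jK' kK' => K' EK tK' nb iK' jK' kK'.
case: (ltngtP k j) => [kj' | jk | /val_inj e]; last by rewrite e eqxx in kj.
- have hu : move_valence (transfers K) (x j) (a i) (x j) < transfers K' (x j).
    rewrite /move_valence EK /move_valence ind_id.
    by rewrite !ind_neq ?ax ?(inj_eq x_inj) //; lia.
  have [v [hv {}ht]] := hypertree_exchange tK' ht hu.
  have : v = a k \/ v = a i.
    apply: (@ind_balance_gt0 _ _ _ (x k) (x j)).
    by move: hv; rewrite /move_valence EK /move_valence; lia.
  by case=> ?; subst v; [exact: nb k j kj' kK' jK' ht | exact: nb i j ij iK' jK' ht].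
- have ik : (i < k)%N := ltn_trans ij jk.
  have hu : transfers K' (a k) < move_valence (transfers K) (x j) (a i) (a k).
    rewrite /move_valence EK /move_valence ind_id.
    by rewrite !ind_neq 1?eq_sym ?ax ?(inj_eq a_inj) //; lia.
  have [v [hv {}ht]] := hypertree_exchange ht tK' hu.
  have : v = x k \/ v = x j.
    apply: (@ind_balance_gt0 _ _ _ (a k) (a i)).
    by move: hv; rewrite /move_valence EK /move_valence; lia.
  case=> ?; subst v; [apply: (nb i j ij iK' jK') | apply: (nb i k ik iK' kK')];
    by apply: eq_hypertree ht => e; rewrite /move_valence EK /move_valence; lia.
Qed.

End Induction.

Lemma transfers_hypertree_no_backward K :
  hypertree H (transfers K) /\ no_backward_transfer K.
Proof.
have [n] := ubnP #|K|; elim: n K => // n IHn K /ltnSE leKn.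
have IH K' : (#|K'| < #|K|)%N -> hypertree H (transfers K') /\ no_backward_transfer K'.
  by move=> ltK'; apply: IHn; apply: leq_trans ltK' leKn.
by split; [apply: transfers_hypertree_step | apply: no_backward_transfer_step].
Qed.

End Transfers.

Theorem lemma4p5 (V E : finType) (H : hypergraph V E) (m : nat)
    (a x : 'I_m -> E) (f : E -> int) :
  hyperedges_nonempty H -> hconnected H ->
  injective a -> injective x ->
  (forall i j, a i != x j) ->
  hypertree H f ->
  (forall j, can_transfer H f (x j) (a j)) ->
  (forall i j : 'I_m, (i < j)%N -> ~ can_transfer H f (x j) (a i)) ->
  forall J : {set 'I_m},
    hypertree H (fun e => (f e + \sum_(j in J) (ind (a j) e - ind (x j) e))%R).
Proof.
move=> _ _ a_inj x_inj ax f_tree transfer no_transfer J.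
exact: (transfers_hypertree_no_backward a_inj x_inj ax f_tree transfer no_transfer J).1.
Qed.
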